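(* Consider an instance of ESUP with $n$ clients, $m$ days, integer deadlines $d_{i,j}\ge 1$ and equity parameter $k\in\{0,\dots,m\}$. Let $d^*_j=\max_{1\le i\le n} d_{i,j}$. Build the undirected bipartite graph $G$ with vertex sets $V=\{v_{i,j}: 1\le i\le n, 1\le j\le m\}$, $U=\{u_{d,j}: 1\le j\le m, 1\le d\le d^*_j\}$ and $W=\{w_{i,\ell}: 1\le i\le n, 1\le \ell\le m-k\}$, where for each $i,j$ the vertex $v_{i,j}$ is adjacent exactly to $w_{i,1},\dots,w_{i,m-k}$ and to $u_{1,j},\dots,u_{d_{i,j},j}$ (there are no other edges). Then $G$ has a matching of size $nm$ if and only if there exist schedules $\sigma_1,\dots,\sigma_m$ under which no client is unsatisfied on more than $m-k$ days (i.e., a $k$-equitable set of schedules exists).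
   Context: Equitable Scheduling model: there are $n$ clients and $m$ days; on each day $j$ each client $i$ has one job with integer processing time $p_{i,j}$ and integer deadline $d_{i,j}$, to be processed non-preemptively on a single machine. A schedule for day $j$ is a permutation $\sigma_j$ of $\{1,\dots,n\}$; the completion time of client $i$'s job on day $j$ is $C_{i,j}=\sum_{i_0:\sigma_j(i_0)\le\sigma_j(i)}p_{i_0,j}$. Client $i$ is satisfied on day $j$ if $C_{i,j}\le d_{i,j}$, otherwise unsatisfied. Given $k\in\{0,\dots,m\}$, a set of schedules $\{\sigma_1,\dots,\sigma_m\}$ is $k$-equitable if every client is satisfied on at least $k$ days. ESUP (Equitable Scheduling with Unit Processing Times) is the problem of deciding whether a $k$-equitable set of schedules exists when $p_{i,j}=1$ for all $i,j$ (so $C_{i,j}=\sigma_j(i)$). *)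

From mathcomp Require Import all_boot all_fingroup.
Set Implicit Arguments. Unset Strict Implicit. Unset Printing Implicit Defensive.

(* Clients are 'I_n (client i corresponds to the paper's client i+1),
   days are 'I_m; d i j is the integer deadline of client i on day j. *)

Definition dstar (n m : nat) (d : 'I_n -> 'I_m -> nat) (j : 'I_m) : nat :=
  \max_(i < n) d i j.

(* a global bound on all deadlines, used only to index the U-vertices *)
Definition dmax (n m : nat) (d : 'I_n -> 'I_m -> nat) : nat :=
  \max_(i < n) \max_(j < m) d i j.

(* Ambient vertex type:
   inl (i, j)            ~ v_{i+1, j+1}
   inr (inl (dd, j))     ~ u_{dd+1, j+1}   (only those with dd+1 <= d*_j are vertices)
   inr (inr (i, l))      ~ w_{i+1, l+1},  l < m - k *)
Definition vtx (n m k D : nat) : finType :=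
  (('I_n * 'I_m) + (('I_D * 'I_m) + ('I_n * 'I_(m - k))))%type.

Definition in_G (n m k : nat) (d : 'I_n -> 'I_m -> nat)
  (x : vtx n m k (dmax d)) : bool :=
  match x with
  | inl _ => true
  | inr (inl (dd, j)) => dd.+1 <= dstar d j
  | inr (inr _) => true
  end.

Arguments in_G {n m k} d x.

Definition adjV (n m k : nat) (d : 'I_n -> 'I_m -> nat)
  (v : 'I_n * 'I_m) (y : (('I_(dmax d) * 'I_m) + ('I_n * 'I_(m - k)))%type) : bool :=
  match y with
  | inl (dd, j') => (j' == v.2) && (dd.+1 <= d v.1 v.2)
  | inr (i', _) => i' == v.1
  end.

Arguments adjV {n m k} d v y.

Definition adjG (n m k : nat) (d : 'I_n -> 'I_m -> nat)
  (x y : vtx n m k (dmax d)) : bool :=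
  match x, y with
  | inl v, inr z => adjV d v z
  | inr z, inl v => adjV d v z
  | _, _ => false
  end.

Arguments adjG {n m k} d x y.

Definition is_matching (n m k : nat) (d : 'I_n -> 'I_m -> nat)
  (M : {set {set vtx n m k (dmax d)}}) : Prop :=
  (forall e, e \in M -> exists x y,
      [/\ in_G d x, in_G d y, adjG d x y & e = [set x; y]]) /\
  (forall e1 e2, e1 \in M -> e2 \in M -> e1 != e2 -> [disjoint e1 & e2]).

Arguments is_matching {n m k} d M.

(* ESUP: unit processing times; sigma j is the schedule of day j, and
   client i occupies position (sigma j i) (0-based), so its completion
   time is C_{i,j} = (sigma j i) + 1. *)
Definition completion (n m : nat) (sigma : 'I_m -> {perm 'I_n}) (i : 'I_n) (j : 'I_m) : nat :=
  (sigma j i).+1.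

Definition satisfied (n m : nat) (d : 'I_n -> 'I_m -> nat)
  (sigma : 'I_m -> {perm 'I_n}) (i : 'I_n) (j : 'I_m) : bool :=
  completion sigma i j <= d i j.

Definition k_equitable (n m : nat) (d : 'I_n -> 'I_m -> nat) (k : nat)
  (sigma : 'I_m -> {perm 'I_n}) : Prop :=
  forall i : 'I_n, k <= #|[set j : 'I_m | satisfied d sigma i j]|.

From mathcomp Require Import all_boot all_fingroup.
From mathcomp Require Import zify.
Set Implicit Arguments. Unset Strict Implicit. Unset Printing Implicit Defensive.

(* Every edge of G joins a vertex v_{i,j} of V to a vertex of U or W, so a
   matching of size nm = |V| must saturate V.  Both sides of the equivalence
   are therefore compared with an intermediate notion: a "saturating partner
   function", an injective map p sending every v_{i,j} to a neighbour.
   - Matchings of size nm are exactly the graphs of such maps: one direction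
     builds the edges {v, p v}; the other uses a counting argument
     (disjoint_blocks_cover) to see that V is covered, then reads p off M.
   - From k-equitable schedules, send v_{i,j} to u_{sigma_j(i)+1, j} when
     client i is satisfied on day j, and otherwise to w_{i,l}, where l is the
     rank of j among the (at most m-k) days on which i is unsatisfied.
   - Conversely, on day j order the clients by the key "dd if matched to
     u_{dd,j}, a large distinct value if matched into W"; by perm_below_key
     each client matched into U finishes by its deadline, so the days on which
     client i is unsatisfied are matched to distinct vertices w_{i,l}, of
     which there are m-k. *)

(* Pairwise disjoint blocks, each meeting A, that are at least as many as the
   elements of A must cover A: picking a point of A in each block is injective. *)
Lemma disjoint_blocks_cover (T : finType) (A : {set T}) (M : {set {set T}}) :
  (forall e1 e2, e1 \in M -> e2 \in M -> e1 != e2 -> [disjoint e1 & e2]) ->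
  (forall e, e \in M -> e :&: A != set0) -> #|A| <= #|M| ->
  forall a, a \in A -> exists2 e, e \in M & a \in e.
Proof.
move=> disjM meetA cardM a aA.
have [/exists_inP // | /exists_inPn uncov] := boolP [exists e in M, a \in e].
exfalso.
pose pt e := [pick x in e :&: A].
have pt_in e : e \in M -> exists2 x, pt e = Some x & x \in e :&: A.
  move=> eM; rewrite /pt; case: pickP => [x xe | none]; first by exists x.
  by have /set0Pn [x] := meetA e eM; rewrite none.
have pt_inj : {in M &, injective pt}.
  move=> e1 e2 e1M e2M pte; apply/eqP/negPn/negP => ne12.
  have [x pt1 /setIP [xe1 _]] := pt_in e1 e1M.
  have [y pt2 /setIP [ye2 _]] := pt_in e2 e2M.
  move: pte; rewrite pt1 pt2 => -[xy]; subst y.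
  by have /disjointFr := disjM _ _ e1M e2M ne12; move/(_ x xe1); rewrite ye2.
have pt_sub : pt @: M \subset Some @: (A :\ a).
  apply/subsetP => _ /imsetP [e eM ->]; have [x -> /setIP [xe xA]] := pt_in e eM.
  apply: imset_f; rewrite !inE xA andbT; apply: contraTneq xe => ->.
  exact: uncov.
have := subset_leq_card pt_sub.
rewrite (card_in_imset pt_inj) (card_imset _ (@Some_inj _)).
by move: cardM; rewrite (cardsD1 a A) aA; lia.
Qed.

(* Listing the elements of 'I_n by increasing value of an injective key f gives
   a permutation that places every element no later than its key. *)
Lemma perm_below_key n (f : 'I_n -> nat) :
  injective f -> exists s : {perm 'I_n}, forall i, s i <= f i.
Proof.
move=> f_inj; pose rank i := #|[set i' | f i' < f i]|.
have rank_lt i : rank i < n.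
  rewrite -[n]card_ord -cardsT; apply: proper_card; rewrite properT.
  by apply/negP => /eqP full; have := in_setT i; rewrite -full inE ltnn.
have rank_mono a b : f a < f b -> rank a < rank b.
  move=> fab; apply: proper_card; rewrite properE; apply/andP; split.
    by apply/subsetP => x; rewrite !inE => /ltn_trans; apply.
  by apply/subsetPn; exists a; rewrite !inE // ltnn.
have rank_inj : injective (fun i => Ordinal (rank_lt i)).
  move=> a b /(congr1 val) /= rab.
  by case: (ltngtP (f a) (f b)) => [/rank_mono | /rank_mono | /f_inj //];
    rewrite rab ltnn.
exists (perm rank_inj) => i; rewrite permE /= /rank cardE.
rewrite -(size_map f) -[X in _ <= X](size_iota 0 (f i)); apply: uniq_leq_size.
  by rewrite map_inj_uniq ?enum_uniq.
by move=> x /mapP [y]; rewrite mem_enum inE => fy ->; rewrite mem_iota.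
Qed.

Section MatchingPartner.
Variables (n m k : nat) (d : 'I_n -> 'I_m -> nat).
Local Notation V := (vtx n m k (dmax d)).
Local Notation Nbr := (('I_(dmax d) * 'I_m) + ('I_n * 'I_(m - k)))%type.

Definition saturating (p : 'I_n * 'I_m -> Nbr) : Prop :=
  injective p /\ forall v, adjV d v (p v).

Lemma adjV_in_G v (z : Nbr) : adjV d v z -> in_G d (inr z : V).
Proof.
case: z => [[dd j] | //] /= /andP [/eqP -> dd_lt].
exact: leq_trans dd_lt (@leq_bigmax _ (fun i => d i v.2) v.1).
Qed.

Lemma matching_edge (M : {set {set V}}) e : is_matching d M -> e \in M ->
  exists v z, adjV d v z /\ e = [set inl v; inr z].
Proof.
move=> [edgeM _] /edgeM [[x|x] [[y|y] [_ _ xy ->]]] //; first by exists x, y.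
by exists y, x; rewrite setUC.
Qed.

Lemma saturating_matching p : saturating p ->
  exists M : {set {set V}}, is_matching d M /\ #|M| = n * m.
Proof.
move=> [p_inj p_adj]; pose edge v : {set V} := [set inl v; inr (p v)].
have edge_meet v1 v2 x : x \in edge v1 -> x \in edge v2 -> v1 = v2.
  by rewrite !inE => /orP [] /eqP -> /orP [] /eqP // [] //; apply: p_inj.
have edge_inj : injective edge.
  by move=> v1 v2 e12; apply: (edge_meet v1 v2 (inl v1)); rewrite -?e12 set21.
exists (edge @: setT); split; last by rewrite card_imset // cardsT card_prod !card_ord.
split=> [_ /imsetP [v _ ->] | _ _ /imsetP [v1 _ ->] /imsetP [v2 _ ->] ne12].
  by exists (inl v), (inr (p v)); split=> //; [exact: (adjV_in_G (p_adj v)) | exact: p_adj].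
rewrite -setI_eq0; apply/set0Pn => -[x /setIP [x1 x2]]; move: ne12.
by rewrite (edge_meet _ _ _ x1 x2) eqxx.
Qed.

(* A matching of size nm = |V| covers V, hence defines a saturating partner
   function. *)
Lemma matching_saturating (M : {set {set V}}) : is_matching d M -> #|M| = n * m ->
  exists p, saturating p.
Proof.
move=> matM cardM; have [_ disjM] := matM.
pose A : {set V} := [set inl v | v : 'I_n * 'I_m].
have cardA : #|A| = n * m.
  by rewrite card_imset; [rewrite card_prod !card_ord | move=> ? ? []].
have meetA e : e \in M -> e :&: A != set0.
  move=> /(matching_edge matM) [v [z [_ ->]]].
  by apply/set0Pn; exists (inl v); rewrite !inE eqxx imset_f.
have partner v : exists z, adjV d v z && ([set inl v; inr z] \in M).
  have vA : inl v \in A by exact: imset_f.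
  have cardAM : #|A| <= #|M| by rewrite cardA cardM.
  have [e eM] := disjoint_blocks_cover disjM meetA cardAM vA.
  have [v' [z [adj_z e_def]]] := matching_edge matM eM.
  rewrite e_def !inE => /orP [/eqP [->] | /eqP //].
  by exists z; rewrite adj_z -e_def.
have [p /(_ _) /andP p_spec] := fin_all_exists partner.
exists p; split=> [v1 v2 p12 | v]; last by have [] := p_spec v.
have [_ e1M] := p_spec v1; have [_ e2M] := p_spec v2.
have e12 : [set inl v1; inr (p v1)] = [set inl v2; inr (p v2)].
  apply/eqP/negPn/negP => /(disjM _ _ e1M e2M) /(@disjointFr _ _ _ (inr (p v1))).
  by rewrite p12 !inE !eqxx !orbT => /(_ isT).
by have := set21 (inl v1) (inr (p v1)); rewrite e12 !inE => /orP [/eqP [] | /eqP].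
Qed.

End MatchingPartner.

Section SchedulePartner.
Variables (n m k : nat) (d : 'I_n -> 'I_m -> nat).
Local Notation Nbr := (('I_(dmax d) * 'I_m) + ('I_n * 'I_(m - k)))%type.

Definition unsat_days (sigma : 'I_m -> {perm 'I_n}) (i : 'I_n) : {set 'I_m} :=
  ~: [set j | satisfied d sigma i j].

Lemma k_equitableE sigma : k <= m ->
  k_equitable d k sigma <-> forall i, #|unsat_days sigma i| <= m - k.
Proof.
move=> km; split=> bound i; have := bound i;
  have := cardsC [set j | satisfied d sigma i j]; rewrite card_ord /unsat_days;
  set sat := #|[set _ | _]|; set unsat := #|~: _|; lia.
Qed.

(* dmax d bounds every deadline, so positions before a deadline index U. *)
Lemma d_le_dmax i j : d i j <= dmax d.
Proof.
apply: leq_trans (@leq_bigmax _ (fun j => d i j) j) _.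
exact: (@leq_bigmax _ (fun i => \max_(j < m) d i j) i).
Qed.

(* Equitable schedules give a saturating partner function: satisfied jobs go
   to U at their position, unsatisfied ones to W at their rank among the
   client's unsatisfied days. *)
Lemma schedule_saturating sigma : k <= m -> k_equitable d k sigma ->
  exists p : 'I_n * 'I_m -> Nbr, saturating p.
Proof.
move=> km /(k_equitableE _ km) few_unsat.
(* tag v z pins the partner of v down enough to make the choice injective *)
pose tag (v : 'I_n * 'I_m) (z : Nbr) : bool :=
  match z with
  | inl (dd, _) => dd == sigma v.2 v.1 :> nat
  | inr (_, l) => (v.2 \in unsat_days sigma v.1) &&
                  (l == index v.2 (enum (unsat_days sigma v.1)) :> nat)
  end.
have partner v : exists z, adjV d v z && tag v z.
  case: v => i j; have [sat | unsat] := boolP (satisfied d sigma i j).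
    have lt_D : sigma j i < dmax d := leq_trans sat (d_le_dmax i j).
    by exists (inl (Ordinal lt_D, j)); rewrite /tag /= !eqxx andbT; exact: sat.
  have j_unsat : j \in unsat_days sigma i by rewrite inE in_set.
  have lt_mk : index j (enum (unsat_days sigma i)) < m - k.
    apply: leq_trans (few_unsat i); rewrite cardE index_mem mem_enum //.
  by exists (inr (i, Ordinal lt_mk)); rewrite /tag /= j_unsat !eqxx.
have [p /(_ _) /andP p_spec] := fin_all_exists partner.
exists p; split=> [[i1 j1] [i2 j2] p12 | v]; last by have [] := p_spec v.
have [adj1 tag1] := p_spec (i1, j1); have [adj2 tag2] := p_spec (i2, j2).
move: adj1 tag1 adj2 tag2; rewrite -p12.
case: (p (i1, j1)) => [[dd j'] | [i' l]] /=.
  move=> /andP [/eqP -> _] /eqP dd1 /andP [/eqP j12 _] /eqP dd2; subst j2.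
  by rewrite (perm_inj (val_inj (etrans (esym dd1) dd2))).
move=> /eqP -> /andP [u1 /eqP l1] /eqP i12 /andP [u2 /eqP l2]; subst i2.
congr pair; apply: (@index_inj _ j1 (enum (unsat_days sigma i1))); rewrite ?mem_enum //.
by rewrite -l1 -l2.
Qed.

(* A saturating partner function gives equitable schedules: on each day,
   clients matched into U are ordered by their U-index and placed before their
   deadline, and unsatisfied days of client i inject into {w_{i,l}}. *)
Lemma saturating_schedule (p : 'I_n * 'I_m -> Nbr) : k <= m -> saturating p ->
  exists sigma, k_equitable d k sigma.
Proof.
move=> km [p_inj p_adj].
pose key j i := if p (i, j) is inl (dd, _) then val dd else dmax d + i.
have key_inj j : injective (key j).
  move=> i1 i2; rewrite /key.
  have := p_adj (i1, j); have := p_adj (i2, j); have := @p_inj (i1, j) (i2, j).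
  case: (p (i1, j)) => [[dd1 j1] | z1]; case: (p (i2, j)) => [[dd2 j2] | z2] /=.
  - move=> inj /andP [/eqP j2E _] /andP [/eqP j1E _] /val_inj dd12.
    by subst; case: (inj erefl).
  - by move=> _ _ _ e; have := ltn_ord dd1; rewrite e; lia.
  - by move=> _ _ _ e; have := ltn_ord dd2; rewrite -e; lia.
  - by move=> _ _ _ /eqP; rewrite eqn_add2l => /eqP /val_inj.
have [sigma below_key] := fin_all_exists (fun j => perm_below_key (key_inj j)).
exists sigma; apply/k_equitableE => // i.
have sat_U j dd j' : p (i, j) = inl (dd, j') -> satisfied d sigma i j.
  move=> pij; have := p_adj (i, j); have := below_key j i.
  by rewrite /key pij /satisfied /completion => le /andP [_]; apply: leq_ltn_trans.
have to_W : [set p (i, j) | j in unsat_days sigma i] \subset [set inr (i, l) | l : 'I_(m - k)].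
  apply/subsetP => z /imsetP [j]; rewrite inE in_set => unsat ->.
  have := p_adj (i, j); case pij: (p (i, j)) => [[dd j'] | [i' l]] /=.
    by rewrite (sat_U _ _ _ pij) in unsat.
  by move=> /eqP ->; exact: imset_f.
have := subset_leq_card to_W.
rewrite !card_imset ?card_ord //; first by move=> l1 l2 [].
by move=> j1 j2 /p_inj [].
Qed.

End SchedulePartner.

Theorem lemma1 (n m k : nat) (d : 'I_n -> 'I_m -> nat)
  (hd : forall i j, 1 <= d i j) (hk : k <= m) :
  (exists M : {set {set vtx n m k (dmax d)}}, is_matching d M /\ #|M| = n * m)
  <-> (exists sigma : 'I_m -> {perm 'I_n}, k_equitable d k sigma).
Proof.
split=> [[M [matM cardM]] | [sigma equitable]].
  have [p satp] := matching_saturating matM cardM.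
  exact: saturating_schedule hk satp.
have [p satp] := schedule_saturating hk equitable.
exact: saturating_matching satp.
Qed.
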